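(* Let $\mathcal{M}\subseteq\mathbb{S}^n$ be compact. Then $\mathcal{S}(\mathcal{M})$ is rank-one generated if and only if $\mathcal{S}(\mathcal{M})\cap\mathcal{T}(\mathcal{M}')$ is rank-one generated for every nonempty $\mathcal{M}'\subseteq\mathcal{M}$.
   Context: $\mathbb{S}^n$ denotes real symmetric $n\times n$ matrices with $\langle A,B\rangle=\mathrm{tr}(AB)$, $\mathbb{S}^n_+$ the PSD cone. For $\mathcal{M}\subseteq\mathbb{S}^n$, $\mathcal{S}(\mathcal{M})=\{X\in\mathbb{S}^n_+:\langle M,X\rangle\ge0\ \forall M\in\mathcal{M}\}$ and $\mathcal{T}(\mathcal{M})=\{X\in\mathbb{S}^n_+:\langle M,X\rangle=0\ \forall M\in\mathcal{M}\}$. A closed convex cone $\mathcal{S}\subseteq\mathbb{S}^n_+$ is rank-one generated (ROG) if $\mathcal{S}=\mathrm{conv}(\mathcal{S}\cap\{xx^\top:x\in\mathbb{R}^n\})$. *)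

From HB Require Import structures.
From mathcomp Require Import all_boot all_order all_algebra.
From mathcomp Require Import all_classical all_reals all_analysis.
Set Implicit Arguments. Unset Strict Implicit. Unset Printing Implicit Defensive.
Import Order.TTheory GRing.Theory Num.Theory.
Import numFieldNormedType.Exports.
Local Open Scope classical_set_scope.
Local Open Scope ring_scope.

Section Defs.
Variables (R : realType) (n : nat).

Definition sym_mx (A : 'M[R]_n) : Prop := A^T = A.

Definition mxdot (A B : 'M[R]_n) : R := \tr (A *m B).

Definition psd (X : 'M[R]_n) : Prop :=
  sym_mx X /\ forall x : 'cV[R]_n, 0 <= (x^T *m X *m x) 0 0.

Definition Sset (M : set 'M[R]_n) : set 'M[R]_n :=
  [set X | psd X /\ forall A, M A -> 0 <= mxdot A X].

Definition Tset (M : set 'M[R]_n) : set 'M[R]_n :=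
  [set X | psd X /\ forall A, M A -> mxdot A X = 0].

Definition rank_one_set : set 'M[R]_n := [set X | exists x : 'cV[R]_n, X = x *m x^T].

Definition conv_hull (A : set 'M[R]_n) : set 'M[R]_n :=
  [set X | exists (k : nat) (lam : 'I_k -> R) (Y : 'I_k -> 'M[R]_n),
     (forall i, 0 <= lam i) /\ \sum_(i < k) lam i = 1 /\
     (forall i, A (Y i)) /\ X = \sum_(i < k) lam i *: Y i].

Definition ROG (S : set 'M[R]_n) : Prop := S = conv_hull (S `&` rank_one_set).

End Defs.

From HB Require Import structures.
From mathcomp Require Import all_boot all_order all_algebra.
From mathcomp Require Import all_classical all_reals all_analysis.
From mathcomp Require Import ring lra.
Import Order.TTheory GRing.Theory Num.Theory.
Import numFieldNormedType.Exports.
Set Implicit Arguments.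
Unset Strict Implicit.
Unset Printing Implicit Defensive.
Local Open Scope classical_set_scope.
Local Open Scope ring_scope.

(* When X = Σ Y_k with rank-one Y_k ∈ S(M) and <A, X> = 0 for A ∈ M', the
   nonnegative terms <A, Y_k> all vanish, so the Y_k lie in T(M').

   Conversely, write X ∈ S(M) as Σ y_k y_k^T and add one term Y = y y^T at a
   time to a rest X'. Starting from Y + X', move along -Y for as long as S(M)
   allows: either X' is reached (induction) or a constraint of M becomes tight.
   A point Z of S(M) at which some A ∈ M is tight lies in S(M) ∩ T(M') for the
   nonempty set M' of its tight constraints, hence is a sum of rank-one elements
   of S(M). If Y ∈ S(M) this decomposes Y + X'; otherwise moving along +Y also
   ends at a tight point, and Y + X' lies on the segment between the two.
   Compactness of M ensures that a point where no constraint is tight can be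
   moved a little in any direction. *)

Section RankOneGenerated.
Variables (R : realType) (n : nat).
Implicit Types (A P W D X Y Z : 'M[R]_n) (u v x y z : 'cV[R]_n).
Implicit Types (M S T G : set 'M[R]_n).

Lemma mxdotD A X Y : mxdot A (X + Y) = mxdot A X + mxdot A Y.
Proof. by rewrite /mxdot mulmxDr mxtraceD. Qed.

Lemma mxdotZ A c X : mxdot A (c *: X) = c * mxdot A X.
Proof. by rewrite /mxdot -scalemxAr mxtraceZ. Qed.

Lemma mxdot0 A : mxdot A 0 = 0.
Proof. by rewrite /mxdot mulmx0 mxtrace0. Qed.

Lemma mxdot_sum A (I : Type) (r : seq I) (F : I -> 'M[R]_n) :
  mxdot A (\sum_(i <- r) F i) = \sum_(i <- r) mxdot A (F i).
Proof. by rewrite /mxdot mulmx_sumr raddf_sum. Qed.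

Lemma mxdot_continuous Y : continuous (fun A : 'M[R]_n => mxdot A Y).
Proof.
have -> : (fun A => mxdot A Y) = (fun A => \sum_i \sum_j A i j * Y j i).
  by apply/funext => A; apply: eq_bigr => i _; rewrite mxE.
apply: continuous_big => [|i _]; first exact: add_continuous.
apply: continuous_big => [|j _]; first exact: add_continuous.
move=> A; apply: continuousM; first exact: coord_continuous.
exact: cst_continuous.
Qed.

Definition bform X x y : R := (x^T *m X *m y) 0 0.
Local Notation qform X x := (bform X x x).
Local Notation e_ i := (@delta_mx R n 1 i 0).
Local Notation rank_one := (@rank_one_set R n).

Lemma bformD X Y x y : bform (X + Y) x y = bform X x y + bform Y x y.
Proof. by rewrite /bform mulmxDr mulmxDl mxE. Qed.

Lemma bformZ c X x y : bform (c *: X) x y = c * bform X x y.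
Proof. by rewrite /bform -scalemxAr -scalemxAl mxE. Qed.

Lemma bformB X Y x y : bform (X - Y) x y = bform X x y - bform Y x y.
Proof. by rewrite /bform mulmxBr mulmxBl !mxE. Qed.

Lemma bformC X x y : sym_mx X -> bform X x y = bform X y x.
Proof.
move=> sX; rewrite /bform; have -> : x^T *m X *m y = (y^T *m X *m x)^T.
  by rewrite !trmx_mul trmxK sX mulmxA.
by rewrite mxE.
Qed.

Lemma bform_delta X i j : bform X (e_ i) (e_ j) = X i j.
Proof. by rewrite /bform trmx_delta -rowE -colE !mxE. Qed.

Lemma bform_outer u v x y :
  bform (u *m v^T) x y = (x^T *m u) 0 0 * (y^T *m v) 0 0.
Proof.
rewrite /bform mulmxA -mulmxA mxE big_ord1; congr (_ * _).
by rewrite !mxE; apply: eq_bigr => k _; rewrite !mxE mulrC.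
Qed.

Lemma bformDl X x y z : bform X (x + y) z = bform X x z + bform X y z.
Proof. by rewrite /bform linearD !mulmxDl !mxE. Qed.

Lemma bformDr X x y z : bform X x (y + z) = bform X x y + bform X x z.
Proof. by rewrite /bform mulmxDr !mxE. Qed.

Lemma bformZl X c x y : bform X (c *: x) y = c * bform X x y.
Proof. by rewrite /bform linearZ -!scalemxAl !mxE. Qed.

Lemma bformZr X c x y : bform X x (c *: y) = c * bform X x y.
Proof. by rewrite /bform -scalemxAr !mxE. Qed.

Lemma qform_shift X x y t : sym_mx X ->
  qform X (x + t *: y) = qform X x + 2 * t * bform X x y + t ^+ 2 * qform X y.
Proof.
move=> sX; rewrite bformDl !bformDr !bformZl !bformZr [bform X y x]bformC //.
ring.
Qed.

Lemma psd0 : psd (0 : 'M[R]_n).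
Proof. by split=> [|x]; [rewrite /sym_mx trmx0 | rewrite mulmx0 mul0mx mxE]. Qed.

Lemma psdD X Y : psd X -> psd Y -> psd (X + Y).
Proof.
move=> [sX qX] [sY qY]; split=> [|x]; first by rewrite /sym_mx linearD /= sX sY.
by rewrite -[leRHS]/(bform _ x x) bformD addr_ge0 ?qX ?qY.
Qed.

Lemma psdZ c X : 0 <= c -> psd X -> psd (c *: X).
Proof.
move=> c0 [sX qX]; split=> [|x]; first by rewrite /sym_mx linearZ /= sX.
by rewrite -[leRHS]/(bform _ x x) bformZ mulr_ge0 ?qX.
Qed.

Lemma psd_outer v : psd (v *m v^T).
Proof.
split=> [|x]; first by rewrite /sym_mx trmx_mul trmxK.
by rewrite -[leRHS]/(bform _ x x) bform_outer -expr2 sqr_ge0.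
Qed.

Lemma psd_sum_outer (s : seq 'cV[R]_n) : psd (\sum_(v <- s) v *m v^T).
Proof.
elim: s => [|v s IH]; first by rewrite big_nil; exact: psd0.
by rewrite big_cons; apply: psdD => //; exact: psd_outer.
Qed.

Lemma psd_diag_ge0 X i : psd X -> 0 <= X i i.
Proof. by move=> [_ qX]; rewrite -bform_delta; apply: qX. Qed.

Lemma psd_cauchy_schwarz X x y : psd X ->
  bform X x y ^+ 2 <= qform X x * qform X y.
Proof.
move=> [sX qX]; have qX' z : 0 <= qform X z := qX z.
set a := qform X x; set b := bform X x y; set c := qform X y.
have := qX' (x + (- b / c) *: y); rewrite qform_shift // -/a -/b -/c.
have [c0|] := ltP 0 c.
  have -> : a + 2 * (- b / c) * b + (- b / c) ^+ 2 * c = (a * c - b ^+ 2) / c.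
    by field; rewrite gt_eqF.
  by rewrite pmulr_lge0 ?invr_gt0 // subr_ge0.
rewrite le_eqVlt ltNge qX' orbF => /eqP c0 _; rewrite c0 mulr0.
(* For c = 0 the form is affine in t, so it stays nonnegative only if b = 0. *)
have [->|b0] := eqVneq b 0; first by rewrite expr0n.
have := qX' (x + (- (a + 1) / (2 * b)) *: y); rewrite qform_shift // -/a -/b -/c c0.
have -> : a + 2 * (- (a + 1) / (2 * b)) * b + (- (a + 1) / (2 * b)) ^+ 2 * 0 = -1.
  by field.
by rewrite ler0N1.
Qed.

Lemma psd_diag0_row X i j : psd X -> X i i = 0 -> X i j = 0.
Proof.
move=> pX Xii; apply/eqP; rewrite -sqrf_eq0 eq_le sqr_ge0 andbT.
by have := psd_cauchy_schwarz (e_ i) (e_ j) pX; rewrite !bform_delta Xii mul0r.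
Qed.

Lemma psd_diag0_eq0 X : psd X -> (forall i, X i i = 0) -> X = 0.
Proof.
by move=> pX X0; apply/matrixP => i j; rewrite mxE (psd_diag0_row j pX (X0 i)).
Qed.

Lemma psd_pivot X i : psd X -> 0 < X i i -> exists v,
  psd (X - v *m v^T) /\ forall j, (X - v *m v^T) j j = X j j - X j i ^+ 2 / X i i.
Proof.
move=> pX c0; have sX := pX.1; set c := X i i in c0 *.
set v := (Num.sqrt c)^-1 *: (X *m e_ i).
have vvE x y : bform (v *m v^T) x y = bform X x (e_ i) * bform X y (e_ i) / c.
  rewrite /v linearZ -scalemxAl -scalemxAr scalerA -expr2 exprVn sqr_sqrtr ?ltW //.
  by rewrite bformZ bform_outer /bform !mulmxA mulrC.
exists v; split=> [|j]; last first.
  by rewrite -[LHS]bform_delta bformB vvE !bform_delta expr2.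
split=> [|x]; first by rewrite /sym_mx linearB /= trmx_mul trmxK sX.
rewrite -[leRHS]/(bform _ x x) bformB vvE -expr2 subr_ge0 ler_pdivrMr //.
by have := psd_cauchy_schwarz x (e_ i) pX; rewrite bform_delta.
Qed.

Lemma psd_sum_outer_decomp X :
  psd X -> exists s : seq 'cV[R]_n, X = \sum_(v <- s) v *m v^T.
Proof.
have [k] := ubnP #|[set j | X j j != 0]%SET|; elim: k X => // k IH X lt_supp pX.
have [i /= Xii|diag0] := pickP [pred j | X j j != 0]; last first.
  exists [::]; rewrite big_nil; apply: psd_diag0_eq0 => // j.
  by apply/eqP; move: (diag0 j) => /= /negbFE.
have c0 : 0 < X i i by rewrite lt_def Xii (psd_diag_ge0 i pX).
have [v [pX1 X1jj]] := psd_pivot pX c0.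
have supp_lt :
    [set j | (X - v *m v^T) j j != 0]%SET \proper [set j | X j j != 0]%SET.
  apply/properP; split.
    apply/fintype.subsetP => j; rewrite !inE X1jj; apply: contra => /eqP Xjj.
    by rewrite Xjj (psd_diag0_row i pX Xjj) expr0n mul0r subrr.
  by exists i; rewrite !inE // X1jj expr2 mulfK ?subrr ?eqxx // gt_eqF.
have [s Es] := IH _ (leq_trans (proper_card supp_lt) lt_supp) pX1.
by exists (v :: s); rewrite big_cons -Es addrC subrK.
Qed.

Record cone (S : set 'M[R]_n) : Prop := Cone {
  cone0 : S 0;
  coneD : forall X Y, S X -> S Y -> S (X + Y);
  coneZ : forall c X, 0 <= c -> S X -> S (c *: X) }.

Lemma coneI S T : cone S -> cone T -> cone (S `&` T).
Proof.
move=> [S0 SD SZ] [T0 TD TZ]; split=> [//|X Y [] ? ? [] ? ?|c X c0 [] ? ?].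
  by split; [apply: SD | apply: TD].
by split; [apply: SZ | apply: TZ].
Qed.

Lemma cone_Sset M : cone (Sset M).
Proof.
split=> [|X Y [pX SX] [pY SY]|c X c0 [pX SX]].
- by split=> [|A _]; [exact: psd0 | rewrite mxdot0].
- by split=> [|A MA]; [exact: psdD | rewrite mxdotD addr_ge0 ?SX ?SY].
- by split=> [|A MA]; [exact: psdZ | rewrite mxdotZ mulr_ge0 ?SX].
Qed.

Lemma cone_Tset M : cone (Tset M).
Proof.
split=> [|X Y [pX TX] [pY TY]|c X c0 [pX TX]].
- by split=> [|A _]; [exact: psd0 | rewrite mxdot0].
- by split=> [|A MA]; [exact: psdD | rewrite mxdotD TX ?TY ?addr0].
- by split=> [|A MA]; [exact: psdZ | rewrite mxdotZ TX ?mulr0].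
Qed.

Lemma rank_oneZ c Y : 0 <= c -> rank_one Y -> rank_one (c *: Y).
Proof.
move=> c0 [x ->]; exists (Num.sqrt c *: x).
by rewrite linearZ /= -scalemxAl -scalemxAr scalerA -expr2 sqr_sqrtr.
Qed.

Definition rank_one_sums (S : set 'M[R]_n) : set 'M[R]_n :=
  [set X | exists2 s : seq 'M[R]_n,
     (forall Y, Y \in s -> (S `&` rank_one) Y) & X = \sum_(Y <- s) Y].

Lemma rank_one_sums1 S X : S X -> rank_one X -> rank_one_sums S X.
Proof.
by move=> SX rX; exists [:: X]; [move=> Y /[!inE] /eqP -> | rewrite big_seq1].
Qed.

Lemma rank_one_sumsS S T : S `<=` T -> rank_one_sums S `<=` rank_one_sums T.
Proof. by move=> ST X [s hs ->]; exists s => // Y /hs [/ST]. Qed.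

Lemma cone_rank_one_sums S : cone S -> cone (rank_one_sums S).
Proof.
move=> cS; split=> [|_ _ [s1 h1 ->] [s2 h2 ->]|c _ c0 [s hs ->]].
- by exists [::]; rewrite ?big_nil.
- exists (s1 ++ s2); last by rewrite big_cat.
  by move=> Y; rewrite mem_cat => /orP [/h1|/h2].
- exists [seq c *: Y | Y <- s]; last by rewrite big_map scaler_sumr.
  move=> _ /mapP [Y /hs [SY rY] ->].
  by split; [exact: coneZ | exact: rank_oneZ].
Qed.

Lemma rank_one_sums_sub S : cone S -> rank_one_sums S `<=` S.
Proof.
move=> cS _ [s hs ->]; rewrite big_seq.
by apply: big_ind => [|X Y|Y /hs []]; [exact: cone0 | exact: coneD |].
Qed.

Lemma conv_hull_rank_one S :
  cone S -> conv_hull (S `&` rank_one) = rank_one_sums S.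
Proof.
move=> cS; apply/seteqP; split=> X.
  move=> [k [lam [Y [lam0 [_ [hY ->]]]]]].
  exists [seq lam i *: Y i | i <- index_enum 'I_k]; last by rewrite big_map.
  move=> _ /mapP [i _ ->]; have [SY rY] := hY i.
  by split; [exact: coneZ | exact: rank_oneZ].
move=> [[|Y0 s'] hs ->].
  exists 1%N, (fun=> 1), (fun=> 0).
  rewrite !big_ord1 big_nil scaler0; do !split=> //; first exact: cone0.
  by exists 0; rewrite mul0mx.
set s := Y0 :: s'; set k := size s.
have k0 : k%:R != 0 :> R by rewrite pnatr_eq0.
exists k, (fun=> k%:R^-1), (fun i => k%:R *: nth 0 s i).
split=> [i|]; first by rewrite invr_ge0 ler0n.
split; first by rewrite sumr_const card_ord -[_ *+ k]mulr_natr mulVf.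
split=> [i|].
  have [SY rY] := hs _ (mem_nth 0 (ltn_ord i)).
  by split; [apply: coneZ | apply: rank_oneZ]; rewrite ?ler0n.
rewrite (big_nth 0) big_mkord; apply: eq_bigr => i _.
by rewrite scalerA mulVf ?scale1r.
Qed.

Lemma ROG_coneP S : cone S -> ROG S <-> S `<=` rank_one_sums S.
Proof.
move=> cS; rewrite /ROG conv_hull_rank_one //; split=> [<-//|sub].
by apply/seteqP; split=> //; exact: rank_one_sums_sub.
Qed.

Lemma cone_segment G P Y s1 s2 : cone G -> 0 <= s1 -> 0 <= s2 ->
  G (P - s1 *: Y) -> G (P + s2 *: Y) -> G P.
Proof.
move=> cG s1_ge0 s2_ge0 G1 G2; have [s0|s_neq0] := eqVneq (s1 + s2) 0.
  have s1_0 : s1 = 0 by lra.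
  by move: G1; rewrite s1_0 scale0r subr0.
have -> : P = (s2 / (s1 + s2)) *: (P - s1 *: Y) + (s1 / (s1 + s2)) *: (P + s2 *: Y).
  rewrite !scalerDr scalerN !scalerA addrACA -scalerDl [- _ + _]addrC -scalerBl.
  have -> : s2 / (s1 + s2) + s1 / (s1 + s2) = 1 by field.
  have -> : s1 / (s1 + s2) * s2 - s2 / (s1 + s2) * s1 = 0 by field.
  by rewrite scale1r scale0r addr0.
by apply: (coneD cG); apply: (coneZ cG); rewrite // divr_ge0 // addr_ge0.
Qed.

Lemma ROG_SsetI_Tset M (M' : set 'M[R]_n) :
  M' `<=` M -> ROG (Sset M) -> ROG (Sset M `&` Tset M').
Proof.
move=> sub /(ROG_coneP (cone_Sset M)) rogS.
apply/(ROG_coneP (coneI (cone_Sset M) (cone_Tset M'))) => X [SX [_ TX]].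
have [s hs eX] := rogS X SX; exists s => // Y Ys.
have [[pY SY] rY] := hs Y Ys; split=> //; split=> //; split=> // A M'A.
have ge0 Z : Z \in s -> 0 <= mxdot A Z by move=> /hs [[_ SZ] _]; apply/SZ/sub.
have : \sum_(Z <- s | Z \in s) mxdot A Z == 0 by rewrite -big_seq -mxdot_sum -eX TX.
by rewrite psumr_eq0 // => /allP /(_ Y Ys); rewrite Ys => /eqP.
Qed.

Lemma sup_affine_ge0 (E : set R) a b : has_sup E ->
  (forall s, E s -> 0 <= a + s * b) -> 0 <= a + sup E * b.
Proof.
move=> supE Eab; have [s Es] := supE.1; have [b_ge0|b_lt0] := leP 0 b.
  apply: le_trans (Eab s Es) _.
  by rewrite lerD2l ler_wpM2r // sup_upper_bound.
have ub : sup E <= - a / b.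
  apply: ge_sup => [|t Et]; first by exists s.
  have := Eab t Et; have : - a / b * b = - a by field; rewrite lt_eqF.
  nra.
have : - a / b * b = - a by field; rewrite lt_eqF.
nra.
Qed.

(* The ratio <A, Y> / <A, Z> is continuous, hence bounded, on the compact M. *)
Lemma Sset_slack M Z Y : compact M -> (forall A, M A -> 0 < mxdot A Z) ->
  exists2 d, 0 < d & forall A s, M A -> `|s| <= d -> 0 <= mxdot A (Z + s *: Y).
Proof.
move=> cM Z_gt0; pose h := (fun A => mxdot A Y) \* (fun A => (mxdot A Z)^-1).
have h_cont : {within M, continuous h}.
  apply: continuous_in_subspaceT => A /[!inE] MA.
  apply: continuousM; first exact: mxdot_continuous.
  by apply: continuousV; [rewrite gt_eqF ?Z_gt0 | exact: mxdot_continuous].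
have [K [_ hK]] := compact_bounded (continuous_compact h_cont cM).
have K1_gt0 : 0 < `|K| + 1 by rewrite ltr_pwDr.
have h_le A : M A -> `|h A| <= `|K| + 1.
  move=> MA; apply: (hK (`|K| + 1)); last by exists A.
  by rewrite (le_lt_trans (ler_norm K)) ?ltrDl.
exists (`|K| + 1)^-1 => [|A s MA s_le]; first by rewrite invr_gt0.
have ZA_gt0 := Z_gt0 A MA.
have -> : mxdot A (Z + s *: Y) = mxdot A Z * (1 + s * h A).
  by rewrite mxdotD mxdotZ /h /=; field; rewrite gt_eqF.
rewrite pmulr_rge0 //; suff : `|s * h A| <= 1 by rewrite ler_norml => /andP[]; lra.
rewrite normrM -(mulVf (lt0r_neq0 K1_gt0)); apply: ler_pM => //; exact: h_le.
Qed.

Lemma Sset_line_search M W D (B : R) : compact M -> 0 <= B -> Sset M W ->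
  (forall s, 0 <= s <= B -> psd (W + s *: D)) ->
  exists2 s, 0 <= s <= B & Sset M (W + s *: D) /\
    (s = B \/ exists2 A, M A & mxdot A (W + s *: D) = 0).
Proof.
move=> cM B_ge0 [pW SW] psdWD.
pose E := [set s | 0 <= s <= B /\ forall A, M A -> 0 <= mxdot A (W + s *: D)].
have E0 : E 0 by split=> [|A MA]; rewrite ?lexx ?B_ge0 // scale0r addr0 SW.
have supE : has_sup E by split; [exists 0 | exists B => s [/andP []]].
set s0 := sup E.
have s0_ge0 : 0 <= s0 := sup_upper_bound supE E0.
have s0_leB : s0 <= B by apply: ge_sup => [|s [/andP []]]; first by exists 0.
have S_s0 : Sset M (W + s0 *: D).
  split=> [|A MA]; first by apply: psdWD; rewrite s0_ge0.
  rewrite mxdotD mxdotZ; apply: sup_affine_ge0 => // s [_ /(_ A MA)].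
  by rewrite mxdotD mxdotZ.
exists s0; first by rewrite s0_ge0.
split=> //; have [->|s0_neqB] := eqVneq s0 B; [by left | right].
apply: contrapT => not_tight.
have pos A : M A -> 0 < mxdot A (W + s0 *: D).
  move=> MA; rewrite lt_def S_s0.2 // andbT; apply/eqP => eq0.
  by apply: not_tight; exists A.
have [d d_gt0 slack] := Sset_slack D cM pos.
pose t := Num.min d (B - s0).
have t_gt0 : 0 < t by rewrite lt_min d_gt0 subr_gt0 lt_neqAle s0_neqB.
have t_le_d : t <= d by rewrite ge_min lexx.
have t_le : t <= B - s0 by rewrite ge_min lexx orbT.
have Et : E (s0 + t).
  split=> [|A MA]; first by apply/andP; split; lra.
  by rewrite scalerDl addrA; apply: slack; rewrite ?gtr0_norm.
by have := sup_upper_bound supE Et; rewrite -/s0; lra.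
Qed.

Section FaceReduction.
Variable M : set 'M[R]_n.
Hypothesis compact_M : compact M.
Hypothesis tight_sums : forall Z,
  Sset M Z -> (exists2 A, M A & mxdot A Z = 0) -> rank_one_sums (Sset M) Z.

Local Notation G := (rank_one_sums (Sset M)).

Let cone_G : cone G := cone_rank_one_sums (cone_Sset M).

Lemma shrink_to_rank_one_sums Y X : psd Y -> psd X -> Sset M (Y + X) ->
  (Sset M X -> G X) -> exists2 s, 0 <= s & G (Y + X - s *: Y).
Proof.
move=> pY pX S_YX IH.
have psd_seg s : 0 <= s <= 1 -> psd (Y + X + s *: - Y).
  move=> /andP [_ s_le1]; rewrite scalerN addrAC -{1}[Y]scale1r -scalerBl.
  by apply: psdD => //; apply: psdZ; rewrite ?subr_ge0.
have [s /andP [s_ge0 _] [S_s end_or_tight]] :=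
  Sset_line_search compact_M ler01 S_YX psd_seg.
exists s; rewrite // -scalerN.
case: end_or_tight => [s1|]; last exact: tight_sums.
rewrite s1 in S_s *; rewrite scale1r addrAC subrr add0r in S_s *.
exact: IH.
Qed.

Lemma grow_to_rank_one_sums Y X A0 : psd Y -> psd X -> Sset M (Y + X) ->
  M A0 -> mxdot A0 Y < 0 -> exists2 s, 0 <= s & G (Y + X + s *: Y).
Proof.
move=> pY pX S_YX MA0 Y_neg; set a := mxdot A0 (Y + X); set b := mxdot A0 Y.
have a_ge0 : 0 <= a := S_YX.2 A0 MA0.
have ab : - a / b * b = - a by field; rewrite lt_eqF.
(* At s = - a / b + 1 the constraint A0 is violated, so the search ends tight. *)
have B_ge0 : 0 <= - a / b + 1 by nra.
have psd_seg s : 0 <= s <= - a / b + 1 -> psd (Y + X + s *: Y).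
  by move=> /andP [s_ge0 _]; apply: psdD; [exact: psdD | exact: psdZ].
have [s /andP [s_ge0 _] [S_s [sB|]]] :=
  Sset_line_search compact_M B_ge0 S_YX psd_seg.
  have := S_s.2 A0 MA0; rewrite mxdotD mxdotZ -/a -/b sB; nra.
by exists s => //; apply: tight_sums.
Qed.

Lemma Sset_sum_outer_sums (s : seq 'cV[R]_n) :
  Sset M (\sum_(v <- s) v *m v^T) -> G (\sum_(v <- s) v *m v^T).
Proof.
elim: s => [|y s IH]; first by rewrite big_nil => _; exact: cone0 cone_G.
rewrite big_cons => S_YX; set Y := y *m y^T in S_YX *.
have pY : psd Y := psd_outer y; have pX := psd_sum_outer s.
have [s1 s1_ge0 G1] := shrink_to_rank_one_sums pY pX S_YX IH.
have [Y_ge0|] := pselect (forall A, M A -> 0 <= mxdot A Y).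
  rewrite -(subrK (s1 *: Y) (Y + _)); apply: (coneD cone_G G1).
  apply: rank_one_sums1; first by apply: (coneZ (cone_Sset M)).
  by apply: rank_oneZ => //; exists y.
move=> /existsNP [A0 /not_implyP [MA0 /negP]]; rewrite -ltNge => Y_neg.
have [s2 s2_ge0 G2] := grow_to_rank_one_sums pY pX S_YX MA0 Y_neg.
exact: cone_segment cone_G s1_ge0 s2_ge0 G1 G2.
Qed.

Lemma ROG_Sset : ROG (Sset M).
Proof.
apply/(ROG_coneP (cone_Sset M)) => X SX.
have [s eX] := psd_sum_outer_decomp SX.1; rewrite eX in SX *.
exact: Sset_sum_outer_sums.
Qed.

End FaceReduction.

Lemma tight_rank_one_sums M Z A0 :
  (forall M', M' `<=` M -> M' !=set0 -> ROG (Sset M `&` Tset M')) ->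
  Sset M Z -> M A0 -> mxdot A0 Z = 0 -> rank_one_sums (Sset M) Z.
Proof.
move=> rogT SZ MA0 Z0; pose M' := [set A | M A /\ mxdot A Z = 0].
have /(ROG_coneP (coneI (cone_Sset M) (cone_Tset M'))) rogZ :
    ROG (Sset M `&` Tset M').
  by apply: rogT => [A []|]; last exists A0.
apply: rank_one_sumsS (@subIsetl _ _ (Tset M')) _ _.
by apply/rogZ; split=> //; split=> [|A []//]; exact: SZ.1.
Qed.

End RankOneGenerated.

Theorem lemma2p13 (R : realType) (n : nat) (M : set 'M[R]_n) :
  (forall A, M A -> sym_mx A) -> compact M ->
  ROG (Sset M) <->
  (forall M' : set 'M[R]_n, M' `<=` M -> M' !=set0 -> ROG (Sset M `&` Tset M')).
Proof.
move=> _ cM; split=> [rogS M' sub _ | rogT]; first exact: ROG_SsetI_Tset.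
apply: ROG_Sset cM _ => Z SZ [A0 MA0 Z0].
exact: tight_rank_one_sums rogT SZ MA0 Z0.
Qed.
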